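(* Let $n\geq 1$ and $k\geq 2$ be integers. Then \[C_k(n)\leq \sum_{t=1}^{\lfloor n/2\rfloor} k^t A_k(n-2t,0^t)+n k^{\lceil n/2\rceil},\] where $0^t$ denotes the word consisting of $t$ zeros.
   Context: Words are over $\Sigma_k=\{0,1,\ldots,k-1\}$. A border of a word $w$ is a non-empty word that is both a proper prefix and a proper suffix of $w$. A word $w$ is closed if $|w|\leq 1$ or if $w$ has a border that occurs exactly twice in $w$ as a factor (overlapping occurrences counted). $C_k(n)$ denotes the number of closed words of length $n$ over $\Sigma_k$. $A_k(m,v)$ denotes the number of words of length $m$ over $\Sigma_k$ that do not contain $v$ as a factor (for $m=0$ the empty word is counted). *)

From mathcomp Require Import all_boot.
Set Implicit Arguments. Unset Strict Implicit. Unset Printing Implicit Defensive.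

Definition occ (T : eqType) (u w : seq T) : nat :=
  count (fun i => take (size u) (drop i w) == u) (iota 0 (size w - size u).+1).

Definition is_border (T : eqType) (u w : seq T) : bool :=
  [&& 0 < size u, size u < size w, prefix u w & suffix u w].

(* closed word: |w| <= 1, or some border occurs exactly twice in w.
   Every border is a prefix take i w with 0 < i < |w|. *)
Definition closed_word (T : eqType) (w : seq T) : bool :=
  (size w <= 1) ||
  has (fun i => is_border (take i w) w && (occ (take i w) w == 2))
      (iota 1 (size w)).

Definition C (k n : nat) : nat :=
  #|[set w : n.-tuple 'I_k | closed_word (w : seq 'I_k)]|.

Definition A (k m : nat) (v : seq 'I_k) : nat :=
  #|[set w : m.-tuple 'I_k | ~~ infix v (w : seq 'I_k)]|.

Definition zeros (k t : nat) (hk : 0 < k) : seq 'I_k := nseq t (Ordinal hk).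
Arguments A k m v : clear implicits.
Arguments C k n : clear implicits.
Arguments zeros k t hk : clear implicits.

From mathcomp Require Import all_boot zify.
From mathcomp Require Import fingroup perm.
Set Implicit Arguments. Unset Strict Implicit. Unset Printing Implicit Defensive.

(* A closed word w of length n has a border u occurring exactly twice in w.
   If 2|u| <= n, then w = u x u where u is not a factor of x, and x is sent
   injectively to a word of the same length avoiding z^|u|: read x from left
   to right, keep track of the longest prefix of u ending the text read so
   far, and exchange z with the letter that would extend that prefix.  An
   output z then always extends the tracked prefix, so |u| consecutive z's
   would make u occur in x.  If 2|u| > n, then w has period n - |u| <= ceil(n/2)
   and is determined by its first n - |u| letters. *)

Lemma tperm_eqL (T : finType) (x y c : T) : (tperm x y c == x) = (c == y).
Proof. by rewrite (can2_eq (tpermK x y) (tpermK x y)) tpermL. Qed.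

Lemma suffix_nseq_leq (T : eqType) (z : T) m p y :
  m <= p -> suffix (nseq p z) y -> suffix (nseq m z) y.
Proof.
by move=> /subnK <-; rewrite nseqD; apply: suffix_trans (suffix_suffix _ _).
Qed.

Lemma suffix_nseqS (T : eqType) (z : T) m y d :
  suffix (nseq m.+1 z) (rcons y d) = (d == z) && suffix (nseq m z) y.
Proof.
have -> : nseq m.+1 z = rcons (nseq m z) z by elim: m => //= m ->.
by rewrite suffix_rcons eq_sym.
Qed.

Section Overlap.
Variables (T : eqType) (u : seq T).

Definition overlap (x : seq T) : nat :=
  \max_(j < (size u).+1 | suffix (take j u) x) j.

Lemma overlap_max x j : j <= size u -> suffix (take j u) x -> j <= overlap x.
Proof.
rewrite -ltnS => lt_j suf_j.
exact: (leq_bigmax_cond (Ordinal lt_j) (F := fun j : 'I_(size u).+1 => nat_of_ord j)).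
Qed.

Lemma suffix_overlap x : suffix (take (overlap x) u) x.
Proof.
rewrite /overlap; elim/big_ind: _ => //; first by rewrite take0 suffix0s.
by move=> a b ha hb; rewrite /maxn; case: ifP.
Qed.

Lemma overlap_lt_size x : ~~ infix u x -> overlap x < size u.
Proof.
apply: contraR; rewrite -leqNgt => ge_u.
have := suffix_overlap x; rewrite take_oversize //; exact: suffixW.
Qed.

Lemma overlap_rcons_nth x c :
  overlap x < size u -> (overlap x).+1 <= overlap (rcons x (nth c u (overlap x))).
Proof.
move=> lt_u; apply: overlap_max => //.
by rewrite (take_nth c lt_u) suffix_rcons eqxx suffix_overlap.
Qed.

End Overlap.

Section Recode.
Variables (T : finType) (z : T) (u : seq T).

Fixpoint recode (acc x : seq T) : seq T :=
  if x is c :: x' then tperm z (nth z u (overlap u acc)) c :: recode (rcons acc c) x'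
  else [::].

Lemma size_recode acc x : size (recode acc x) = size x.
Proof. by elim: x acc => //= c x IHx acc; rewrite IHx. Qed.

Lemma recode_inj acc x y : recode acc x = recode acc y -> x = y.
Proof.
elim: x acc y => [|c x IHx] acc [|d y] //= [].
by move=> /(can_inj (tpermK _ _)) <- /IHx ->.
Qed.

Lemma recode_avoid_nseq_cat x acc out :
  ~~ infix u (acc ++ x) -> ~~ suffix (nseq (overlap u acc).+1 z) out ->
  ~~ infix (nseq (size u) z) out ->
  ~~ infix (nseq (size u) z) (out ++ recode acc x).
Proof.
elim: x acc out => [|c x IHx] acc out u_x run_out nseq_out /=; first by rewrite cats0.
have lt_u : overlap u acc < size u.
  by apply/overlap_lt_size; apply: contra _ u_x => /infix_catr ->.
have lt_u' : overlap u (rcons acc c) < size u.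
  by apply/overlap_lt_size; apply: contra _ u_x; rewrite -cat_rcons => /infix_catr ->.
set d := tperm _ _ c.
have run_out' : ~~ suffix (nseq (overlap u (rcons acc c)).+1 z) (rcons out d).
  rewrite suffix_nseqS tperm_eqL; apply/negP => /andP[/eqP def_c].
  rewrite def_c => /(suffix_nseq_leq (overlap_rcons_nth z lt_u)).
  exact/negP.
rewrite -cat_rcons; apply: IHx => //; first by rewrite cat_rcons.
rewrite infix_rconsl negb_or nseq_out andbT; apply: contra _ run_out'.
exact: suffix_nseq_leq.
Qed.

Lemma recode_avoid_nseq x :
  0 < size u -> ~~ infix u x -> ~~ infix (nseq (size u) z) (recode [::] x).
Proof.
move=> u_gt0 u_x; apply: (@recode_avoid_nseq_cat x [::] [::]) => //.
  by rewrite suffixs0.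
by rewrite infixs0 -size_eq0 size_nseq -lt0n.
Qed.

End Recode.

Section Borders.
Variable T : eqType.
Implicit Types (u w x : seq T).

Definition mid t w : seq T := drop t (take (size w - t) w).

Lemma drop_border w i : suffix (take i w) w -> drop (size w - i) w = take i w.
Proof.
rewrite suffixE size_take_min => /eqP; congr (drop _ _ = _); lia.
Qed.

Lemma border_decomp w t :
  t.*2 <= size w -> suffix (take t w) w -> w = take t w ++ mid t w ++ take t w.
Proof.
move=> le_2t /drop_border suf_t.
rewrite -{1}(cat_take_drop (size w - t) w) suf_t catA; congr (_ ++ _).
by rewrite -{1}(cat_take_drop t (take (size w - t) w)) take_takel //; lia.
Qed.

Lemma take_border_cat w i m :
  suffix (take i w) w -> m <= i ->
  take (size w - i + m) w = take (size w - i) w ++ take m w.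
Proof. by move=> /drop_border suf_i le_m; rewrite takeD suf_i take_takel. Qed.

Lemma eq_from_border w1 w2 i :
  size w1 = size w2 -> i < size w1 ->
  suffix (take i w1) w1 -> suffix (take i w2) w2 ->
  take (size w1 - i) w1 = take (size w1 - i) w2 -> w1 = w2.
Proof.
move=> eq_size lt_i b1 b2 eq_pre.
suff eq_take m : take m w1 = take m w2 by rewrite -(take_size w1) eq_take eq_size take_size.
elim/ltn_ind: m => m IHm.
case: (leqP m (size w1 - i)) => [le_m | gt_m].
  by rewrite -(take_takel w1 le_m) -(take_takel w2 le_m) eq_pre.
case: (leqP m (size w1)) => [le_m | gt_m'].
  have le_i : m - (size w1 - i) <= i by lia.
  rewrite -(subnK (ltnW gt_m)) addnC (take_border_cat b1 le_i).
  move: (take_border_cat b2 le_i); rewrite -eq_size => ->.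
  by rewrite eq_pre IHm //; lia.
rewrite (take_oversize (ltnW gt_m')) take_oversize -?eq_size ?(ltnW gt_m') //.
by have := IHm _ gt_m'; rewrite take_size eq_size take_size.
Qed.

Lemma occ_sandwich u x : 0 < size u -> infix u x -> 3 <= occ u (u ++ x ++ u).
Proof.
move=> u_gt0 /infixP[a [b ->]].
set w := u ++ _.
have occ_at s1 s2 : w = s1 ++ u ++ s2 ->
    size s1 \in [seq p <- iota 0 (size w - size u).+1 | take (size u) (drop p w) == u].
  move=> def_w; rewrite mem_filter mem_iota add0n ltnS def_w.
  rewrite drop_size_cat // take_size_cat // eqxx !size_cat /=; lia.
rewrite /occ -size_filter.
apply: (@uniq_leq_size _ [:: size (@nil T); size (u ++ a); size (u ++ a ++ u ++ b)]).
  by rewrite /= !inE !size_cat; apply/and3P; split; apply/negP; lia.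
move=> p; rewrite !inE => /or3P[] /eqP ->.
- exact: occ_at.
- by apply: occ_at; rewrite /w -!catA.
- by apply: (occ_at _ [::]); rewrite /w -!catA cats0.
Qed.

End Borders.

Lemma leq_card_bigcup_seq (T : finType) (I : eqType) (r : seq I) (F : I -> {set T}) b :
  (forall i, i \in r -> #|F i| <= b i) ->
  #|\bigcup_(i <- r) F i| <= \sum_(i <- r) b i.
Proof.
elim: r => [|i r IHr] le_b; first by rewrite !big_nil cards0.
rewrite !big_cons; apply: leq_trans (leq_card_setU _ _).1 _.
by rewrite leq_add ?le_b ?mem_head // IHr // => j r_j; rewrite le_b // inE r_j orbT.
Qed.

Lemma in_bigcup_seq (T : finType) (I : Type) (r : seq I) (F : I -> {set T}) x :
  (x \in \bigcup_(i <- r) F i) = has (fun i => x \in F i) r.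
Proof. by rewrite (big_morph (fun A : {set T} => x \in A) (in_setU x) (in_set0 x)) big_has. Qed.

Section Counting.
Variables (T : finType) (n : nat).

Definition sandwich_words t :=
  [set w : n.-tuple T | suffix (take t w) w && ~~ infix (take t w) (mid t w)].

Definition bordered_words i := [set w : n.-tuple T | suffix (take i w) w].

Lemma card_bordered_words i : i < n -> #|bordered_words i| <= #|T| ^ (n - i).
Proof.
move=> lt_i; rewrite -(minn_idPl (leq_subr i n)) -card_tuple.
apply: (@leq_card_in _ _ (fun w : n.-tuple T => [tuple of take (n - i) w])).
move=> w1 w2; rewrite !inE => b1 b2 /(congr1 val) /= eq_pre.
by apply/val_inj/(eq_from_border _ _ b1 b2); rewrite ?size_tuple.
Qed.

Lemma card_sandwich_words (z : T) t :
  0 < t -> t.*2 <= n ->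
  #|sandwich_words t| <= #|T| ^ t * #|[set y : (n - t.*2).-tuple T | ~~ infix (nseq t z) y]|.
Proof.
move=> t_gt0 le_2t.
have size_pre (w : n.-tuple T) : size (take t w) = t by rewrite size_takel // size_tuple; lia.
have size_mid (w : n.-tuple T) : size (mid t w) = n - t.*2.
  by rewrite /mid size_drop size_takel size_tuple; lia.
pose g (w : n.-tuple T) :=
  (insubd (nseq_tuple t z) (take t w),
   insubd (nseq_tuple (n - t.*2) z) (recode z (take t w) [::] (mid t w))).
have g1 w : val (g w).1 = take t w by rewrite val_insubd size_pre eqxx.
have g2 w : val (g w).2 = recode z (take t w) [::] (mid t w).
  by rewrite val_insubd size_recode size_mid eqxx.
have g_inj : {in sandwich_words t &, injective g}.
  move=> w1 w2; rewrite !inE => /andP[b1 _] /andP[b2 _] eq_g.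
  have eq_pre : take t w1 = take t w2 by rewrite -!g1 eq_g.
  have eq_mid : mid t w1 = mid t w2.
    by apply: (@recode_inj _ z (take t w1) [::]); rewrite -g2 eq_g g2 eq_pre.
  have [le1 le2] : t.*2 <= size w1 /\ t.*2 <= size w2 by rewrite !size_tuple.
  apply/val_inj/(etrans (border_decomp le1 b1)).
  by rewrite eq_pre eq_mid -(border_decomp le2 b2).
rewrite -(card_tuple t) -cardsT -cardsX -(card_in_imset g_inj).
apply/subset_leq_card/subsetP => _ /imsetP[w + ->]; rewrite !inE => /andP[_ u_mid].
by rewrite g2 -{1}(size_pre w) recode_avoid_nseq ?size_pre.
Qed.

Lemma closed_word_cover (w : n.-tuple T) :
  0 < n -> closed_word w ->
  w \in \bigcup_(t <- index_iota 1 n./2.+1) sandwich_words t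
        :|: \bigcup_(i <- index_iota n./2 n) bordered_words i.
Proof.
move=> n_gt0; rewrite /closed_word size_tuple in_setU !in_bigcup_seq.
case: leqP => [le_n1 _ | lt1n /= /hasP[i _ /andP[/and4P[]]]].
  apply/orP; right; apply/hasP; exists 0; last by rewrite inE take0 suffix0s.
  by rewrite mem_index_iota -divn2; lia.
rewrite size_take_min size_tuple => i_gt0 lt_i _ suf_i /eqP occ2.
case: (leqP i.*2 n) => le_2i; apply/orP; [left | right]; apply/hasP; exists i;
  rewrite ?inE ?suf_i ?mem_index_iota -?divn2 //=; try lia.
apply/negP => /(occ_sandwich _); rewrite -border_decomp ?size_tuple // occ2.
by move/(_ i_gt0).
Qed.

End Counting.

Theorem corollary8 (n k : nat) (hn : 1 <= n) (hk : 2 <= k) :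
  C k n <= \sum_(1 <= t < n./2.+1)
              k ^ t * A k (n - t.*2) (zeros k t (ltnW hk))
           + n * k ^ (uphalf n).
Proof.
have cover : [set w : n.-tuple 'I_k | closed_word w] \subset
    \bigcup_(t <- index_iota 1 n./2.+1) sandwich_words 'I_k n t
    :|: \bigcup_(i <- index_iota n./2 n) bordered_words 'I_k n i.
  by apply/subsetP => w; rewrite inE; apply: closed_word_cover.
apply: leq_trans (subset_leq_card cover) _.
apply: leq_trans (leq_card_setU _ _).1 _; apply: leq_add.
  apply: leq_card_bigcup_seq => t; rewrite mem_index_iota -divn2 => le_t.
  have := @card_sandwich_words _ n (Ordinal (ltnW hk)) t.
  by rewrite card_ord; apply; lia.
apply: (@leq_trans (\sum_(n./2 <= i < n) k ^ uphalf n)).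
  apply: leq_card_bigcup_seq => i; rewrite mem_index_iota => /andP[le_i lt_i].
  apply: leq_trans (card_bordered_words _ lt_i) _.
  by rewrite card_ord leq_pexp2l ?(ltnW hk) // uphalfE -!divn2; lia.
by rewrite sum_nat_const_nat leq_mul2r leq_subr orbT.
Qed.
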